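(* Let $K$ be a field with algebraic closure $\overline{K}$, $U=\{u_1,\dots,u_d\}$ parameters and $X=\{x_1,\dots,x_n\}$ variables ordered $u_1\prec\dots\prec u_d\prec x_1\prec\dots\prec x_n$. Let $\mathbf{P}$ be a parametric system in $K[U][X]$ and $\{\mathbf{C}_1,\dots,\mathbf{C}_m\}$ a Wu's decomposition of $\mathbf{P}$ in $K[U][X]$. Let $\mathbb{S}$ be the set of those $\mathbf{C}_i$ that are non-contradictory ascending chains and $\mathbb{CS}$ the set of those $\mathbf{C}_i$ that are contradictory ascending chains. Then for every $a\in\overline{K}^d\setminus\bigcup_{\mathbf{CS}\in\mathbb{CS}}\mathrm{V}^U(\mathbf{CS})$, \[\mathrm{V}(\mathbf{P}(a))=\bigcup_{\mathbf{C}\in\mathbb{S}}\mathrm{V}(\mathbf{C}(a)\setminus\mathrm{I}(\mathbf{C})(a)).\]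
   Context: A parametric system is a non-empty finite subset of $K[U][X]\setminus K[X]$. For $F\in K[U][X]\setminus\{0\}$, its class is the largest $p$ with $\deg(F,x_p)>0$; if it is $p>0$ the main variable is $x_p$ and, writing $F=C_0x_p^m+\dots+C_m$ with $C_0\ne0$, the initial is $\mathrm{I}(F)=C_0$. A non-contradictory ascending chain is a set $\{C_1,\dots,C_t\}$ with $0<\mathrm{cls}(C_1)<\dots<\mathrm{cls}(C_t)$ and each $C_i$ reduced w.r.t. the earlier ones (degree in $\mathrm{mvar}(C_j)$ less than $\deg(C_j,\mathrm{mvar}(C_j))$ for $j<i$); a contradictory ascending chain is a set $\{F\}$ with $0\neq F\in K[U]$. $\mathrm{I}(\mathbf{C})=\prod_i\mathrm{I}(C_i)$. An ascending chain $\mathbf{C}$ is a characteristic set of $\mathbf{P}$ if $\mathbf{C}\subset\langle\mathbf{P}\rangle_{K[U][X]}$ and the successive pseudo-remainder (w.r.t. main variables, last element first) of every element of $\mathbf{P}$ by $\mathbf{C}$ is $0$. A Wu's decomposition of $\mathbf{P}$ is the finite set of ascending chains produced by Wu's method: compute a characteristic set $\mathbf{C}$ of $\mathbf{P}$; if $\mathbf{C}=\{C_1,\dots,C_t\}$ is non-contradictory, recursively apply the method to each $\mathbf{P}\cup\mathbf{C}\cup\{\mathrm{I}(C_i)\}$, $1\le i\le t$; all characteristic sets obtained form the decomposition. For $a\in\overline{K}^d$, $F(a)$ denotes substitution of $a$ for $U$; $\mathrm{V}^U(\mathbf{B})$ is the common zero set in $\overline{K}^d$ of $\mathbf{B}\subset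 K[U]$; for subsets of $\overline{K}[X]$, $\mathrm{V}(\cdot)$ is the common zero set in $\overline{K}^n$ and $\mathrm{V}(\mathbf{Q}\setminus H)=\mathrm{V}(\mathbf{Q})\setminus\mathrm{V}(H)$. *)

(* K[U][X] is represented as {mpoly {mpoly K[d]}[n]}: polynomials in the
   variables X = x_1..x_n (indices 'I_n, x_{i+1} <-> index i) whose
   coefficients are polynomials in the parameters U = u_1..u_d. *)
From HB Require Import structures.
From mathcomp Require Import all_boot all_order all_algebra.
From mathcomp Require Import mpoly.
Set Implicit Arguments. Unset Strict Implicit. Unset Printing Implicit Defensive.
Import Order.TTheory GRing.Theory.
Local Open Scope ring_scope.

Section Wu.
Variables (R : comNzRingType) (n : nat).
Local Notation Pol := {mpoly R[n]}.

Definition degx (F : Pol) (i : 'I_n) : nat := (\max_(m <- msupp F) m i)%N.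

Definition cls (F : Pol) : nat := (\max_(i < n | (0 < degx F i)%N) i.+1)%N.

Definition mvar (F : Pol) : option 'I_n := [pick i : 'I_n | cls F == i.+1].

Definition mnm_zero_at (m : 'X_{1..n}) (i : 'I_n) : 'X_{1..n} :=
  [multinom (if j == i then 0%N else m j) | j < n].

Definition coefx (F : Pol) (i : 'I_n) (k : nat) : Pol :=
  \sum_(m <- msupp F | m i == k) F@_m *: 'X_[mnm_zero_at m i].

Definition lcx (F : Pol) (i : 'I_n) : Pol := coefx F i (degx F i).

Definition init (F : Pol) : Pol :=
  if mvar F is Some i then lcx F i else F.

Definition prem_step (F : Pol) (i : 'I_n) (G : Pol) : Pol :=
  if (degx F i <= degx G i)%N then
    lcx F i * G - lcx G i * 'X_i ^+ (degx G i - degx F i) * F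
  else G.

(* pseudo-remainder of G by F w.r.t. x_i (deg(F,x_i) > 0 assumed);
   degx G i steps suffice for the degree in x_i to drop below deg(F,x_i) *)
Definition premx (G F : Pol) (i : 'I_n) : Pol :=
  iter (degx G i) (prem_step F i) G.

(* pseudo-remainder w.r.t. the main variable of F; by a nonzero F of
   class 0 (i.e. F in K[U]) the pseudo-remainder is 0 *)
Definition prem (G F : Pol) : Pol :=
  if mvar F is Some i then premx G F i else 0.

(* successive pseudo-remainder by the chain C = [:: C_1; ...; C_t]
   (last element first) *)
Definition sprem (G : Pol) (C : seq Pol) : Pol :=
  foldr (fun c r => prem r c) G C.

Definition in_ideal (P : seq Pol) (f : Pol) : Prop :=
  exists qs : seq Pol, size qs = size P /\
    f = \sum_(j < size P) qs`_j * P`_j.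

Definition nc_chain (C : seq Pol) : Prop :=
  (forall j, (j < size C)%N -> (0 < cls C`_j)%N) /\
  (forall j k, (j < k < size C)%N ->
     (cls C`_j < cls C`_k)%N /\
     (forall i, mvar C`_j = Some i -> (degx C`_k i < degx C`_j i)%N)).

Definition c_chain (C : seq Pol) : Prop :=
  exists F : R, F != 0 /\ C = [:: F%:MP].

Definition asc_chain (C : seq Pol) : Prop := nc_chain C \/ c_chain C.

Definition init_chain (C : seq Pol) : Pol := \prod_(c <- C) init c.

Definition char_set (P C : seq Pol) : Prop :=
  asc_chain C /\ (forall c, c \in C -> in_ideal P c) /\
  (forall p, p \in P -> sprem p C = 0).

(* D is a Wu's decomposition of P: the list of all characteristic sets
   produced by (one run of) Wu's method *)
Inductive wu_dec : seq Pol -> seq (seq Pol) -> Prop :=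
| WuContr P C : char_set P C -> c_chain C -> wu_dec P [:: C]
| WuNonContr P C (Ds : seq (seq (seq Pol))) :
    char_set P C -> nc_chain C -> size Ds = size C ->
    (forall j, (j < size C)%N -> wu_dec (P ++ C ++ [:: init C`_j]) (nth [::] Ds j)) ->
    wu_dec P (C :: flatten Ds).

End Wu.

Definition in_KX (K : fieldType) (d n : nat) (F : {mpoly {mpoly K[d]}[n]}) : Prop :=
  forall m, exists c : K, F@_m = c%:MP.

Definition evalU (K : fieldType) (L : fieldType) (iota : {rmorphism K -> L})
  (d n : nat) (a : 'I_d -> L) (F : {mpoly {mpoly K[d]}[n]}) : {mpoly L[n]} :=
  map_mpoly (fun c : {mpoly K[d]} => (map_mpoly iota c).@[a]) F.

Definition alg_closure (K : fieldType) (L : closedFieldType)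
  (iota : {rmorphism K -> L}) : Prop :=
  forall x : L, exists p : {poly K}, p != 0 /\ root (map_poly iota p) x.

(* Pseudo-division gives [I(c)^k * G = prem G c + q * c], so at a point where
   every element of a chain C vanishes and no initial of C does, G vanishes as
   soon as its successive pseudo-remainder by C does.  Since a characteristic
   set reduces every element of P to 0, each V(C \ I(C)) lies in V(P).
   Conversely, a zero of P is a zero of the characteristic set C, which lies
   in the ideal of P; either I(C) does not vanish there, or some initial does
   and the point is a zero of the system P ∪ C ∪ {I(C_i)} of the next
   recursive call of Wu's method.  The choice of a rules out contradictory
   chains, so the recursion ends at a non-contradictory one.  Both directions
   only use that substituting a for U and x for X is a ring morphism into an
   integral domain. *)
From HB Require Import structures.
From mathcomp Require Import all_boot all_order all_algebra.
From mathcomp Require Import mpoly.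
Set Implicit Arguments. Unset Strict Implicit. Unset Printing Implicit Defensive.
Import GRing.Theory.
Local Open Scope ring_scope.

Section PseudoDivision.
Variables (R : comNzRingType) (n : nat).
Implicit Types (F G : {mpoly R[n]}) (i : 'I_n).

Lemma prem_step_pseudo_div F i G :
  exists k q, lcx F i ^+ k * G = prem_step F i G + q * F.
Proof.
rewrite /prem_step; case: ifP => _.
  by exists 1%N, (lcx G i * 'X_i ^+ (degx G i - degx F i)); rewrite expr1 subrK.
by exists 0%N, 0; rewrite expr0 mul1r mul0r addr0.
Qed.

Lemma iter_prem_step_pseudo_div F i k0 G :
  exists k q, lcx F i ^+ k * G = iter k0 (prem_step F i) G + q * F.
Proof.
elim: k0 => [|k0 [k [q IH]]] /=.
  by exists 0%N, 0; rewrite expr0 mul1r mul0r addr0.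
have [k' [q' E]] := prem_step_pseudo_div F i (iter k0 (prem_step F i) G).
exists (k' + k)%N, (q' + lcx F i ^+ k' * q).
by rewrite exprD -mulrA IH mulrDr E mulrDl mulrA addrA.
Qed.

Lemma prem_pseudo_div F G : exists k q, init F ^+ k * G = prem G F + q * F.
Proof.
rewrite /prem /init; case: (mvar F) => [i|]; first exact: iter_prem_step_pseudo_div.
by exists 1%N, G; rewrite expr1 add0r mulrC.
Qed.

Lemma wu_dec_sprem (P : seq {mpoly R[n]}) D : wu_dec P D ->
  forall C, C \in D -> forall p, p \in P -> sprem p C = 0.
Proof.
elim=> {P D} [P C [_ [_ PC]] _ | P C Ds [_ [_ PC]] _ sizeDs _ IH] C'.
  by rewrite inE => /eqP ->.
rewrite inE => /orP [/eqP -> //| /flattenP [s sDs C's] p Pp].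
have [j ltjC sDj] : exists2 j, (j < size C)%N & s = nth [::] Ds j.
  by exists (index s Ds); rewrite -?sizeDs ?index_mem ?nth_index.
by apply: (IH j ltjC); rewrite -?sDj // mem_cat Pp.
Qed.

End PseudoDivision.

Section ZerosUnderMorphism.
Variables (R : comNzRingType) (n : nat) (L : idomainType).
Variable phi : {rmorphism {mpoly R[n]} -> L}.

Lemma in_ideal_root P c :
  in_ideal P c -> (forall p, p \in P -> phi p = 0) -> phi c = 0.
Proof.
move=> [qs [_ ->]] P0; rewrite rmorph_sum big1 // => j _.
by rewrite rmorphM /= (P0 P`_j) ?mulr0 // mem_nth.
Qed.

Lemma sprem_root G C :
  (forall c, c \in C -> phi c = 0) -> (forall c, c \in C -> phi (init c) != 0) ->
  phi (sprem G C) = 0 -> phi G = 0.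
Proof.
elim: C => [//|c C IH] C0 initC /= premG0.
have [Cc cC] : phi c = 0 /\ phi (init c) != 0 by rewrite C0 ?initC ?mem_head.
apply: IH => [c' C'c'|c' C'c'|]; first by rewrite C0 // inE C'c' orbT.
  by rewrite initC // inE C'c' orbT.
have [k [q /(congr1 phi)]] := prem_pseudo_div c (sprem G C).
rewrite rmorphD !rmorphM rmorphXn /= premG0 Cc mulr0 addr0 => /eqP.
by rewrite mulf_eq0 expf_eq0 (negbTE cC) andbF => /eqP.
Qed.

Lemma wu_dec_cover (P : seq {mpoly R[n]}) D : wu_dec P D ->
  (forall CS, CS \in D -> c_chain CS -> exists2 F, F \in CS & phi F != 0) ->
  (forall p, p \in P -> phi p = 0) ->
  exists2 C, C \in D & [/\ nc_chain C, forall c, c \in C -> phi c = 0 &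
                           phi (init_chain C) != 0].
Proof.
elim=> {P D} [P C [_ [PC _]] cC | P C Ds [_ [PC _]] ncC sizeDs _ IH] noCS P0.
  have [F CF] := noCS C (mem_head _ _) cC.
  by rewrite (in_ideal_root (PC F CF) P0) eqxx.
have C0 c : c \in C -> phi c = 0 by move=> Cc; exact: in_ideal_root (PC c Cc) P0.
have [initC|] := boolP (phi (init_chain C) != 0); first by exists C; rewrite ?mem_head.
rewrite negbK rmorph_prod prodf_seq_eq0 => /hasP [c Cc /= /eqP initc0].
have ltjC : (index c C < size C)%N by rewrite index_mem.
have sub_Dj CS : CS \in nth [::] Ds (index c C) -> CS \in C :: flatten Ds.
  move=> DjCS; rewrite inE; apply/orP; right.
  by apply/flattenP; exists (nth [::] Ds (index c C)); rewrite // mem_nth ?sizeDs.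
have Pj0 p : p \in P ++ C ++ [:: init C`_(index c C)] -> phi p = 0.
  rewrite !mem_cat => /or3P [Pp|Cp|]; [exact: P0|exact: C0|].
  by rewrite inE nth_index // => /eqP ->.
have [C' DjC' C'P] := IH _ ltjC (fun CS DjCS => noCS CS (sub_Dj CS DjCS)) Pj0.
by exists C' => //; exact: sub_Dj.
Qed.

End ZerosUnderMorphism.

Lemma evalUC (K L : fieldType) (iota : {rmorphism K -> L}) (d n : nat)
  (a : 'I_d -> L) (c : {mpoly K[d]}) :
  evalU iota a c%:MP_[n] = ((map_mpoly iota c).@[a])%:MP.
Proof. exact: (map_mpolyC n (meval a \o map_mpoly iota)%FUN). Qed.

Theorem corollary2 (K : fieldType) (L : closedFieldType)
  (iota : {rmorphism K -> L}) (Hcl : alg_closure iota)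
  (d n : nat) (P : seq {mpoly {mpoly K[d]}[n]})
  (HP0 : P != [::]) (HPX : forall p, p \in P -> ~ in_KX p)
  (D : seq (seq {mpoly {mpoly K[d]}[n]})) (HD : wu_dec P D)
  (a : 'I_d -> L)
  (Ha : forall CS, CS \in D -> c_chain CS ->
          ~ (forall F, F \in CS -> evalU iota a F = 0)) :
  forall x : 'I_n -> L,
    (forall p, p \in P -> (evalU iota a p).@[x] = 0) <->
    (exists2 C, C \in D &
       [/\ nc_chain C,
           forall c, c \in C -> (evalU iota a c).@[x] = 0 &
           (evalU iota a (init_chain C)).@[x] != 0]).
Proof.
move=> x.
pose eval_a : {rmorphism {mpoly K[d]} -> L} := (meval a \o map_mpoly iota)%FUN.
pose phi : {rmorphism {mpoly {mpoly K[d]}[n]} -> L} :=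
  (meval x \o map_mpoly eval_a)%FUN.
split => [P0 | [C DC [_ C0 initC0]] p Pp].
  apply: (wu_dec_cover (phi := phi) HD) => // CS DCS cCS.
  have [F [_ CS_F]] := cCS; exists F%:MP; first by rewrite CS_F mem_head.
  apply/negP => /eqP F0; apply: (Ha CS DCS cCS) => F'; rewrite CS_F inE => /eqP ->.
  have {}F0 : (evalU iota a F%:MP).@[x] = 0 by [].
  by move: F0; rewrite evalUC mevalC => ->; rewrite mpolyC0.
apply: (sprem_root (phi := phi) (C := C)) => [c Cc|c Cc|]; first exact: C0.
  have : phi (init_chain C) != 0 := initC0.
  by rewrite rmorph_prod prodf_seq_neq0 => /allP/(_ c Cc).
by rewrite (wu_dec_sprem HD DC Pp) rmorph0.
Qed.
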